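(* Consider selective layer fine-tuning in federated learning with one local step per epoch ($\tau=1$), run for $T$ epochs with learning rate $\eta>0$ from $\theta^0$. Assume: (i) ($\gamma$-smoothness) there is $\gamma>0$ with $\|\nabla f_i(\theta)-\nabla f_i(\theta')\|_2\le\gamma\|\theta-\theta'\|_2$ for all $\theta,\theta'$ and all $i\in\mathcal{N}$; (ii) (unbiased, bounded-variance stochastic gradients) for all $i$, $l$, $\theta$ and random mini-batches $\xi$, $\mathbb{E}[g_{i,l}(\theta;\xi)]=\nabla_l f_i(\theta)$, and there are $\sigma_l>0$ with $\|g_{i,l}(\theta;\xi)-\nabla_l f_i(\theta)\|^2\le\sigma_l^2$ for all $i$, and $\sum_{l\in\mathcal{L}_t}\sigma_l^2\le\sigma^2$ for all $t$; (iii) (gradient diversity) there are $\kappa_l>0$ with $\|\nabla_l f(\theta)-\nabla_l f_i(\theta)\|^2\le\kappa_l^2$ for all $i\in\mathcal{N}$, $l\in\mathcal{L}$ and all $\theta$. Let $C:=1-4\eta\gamma>0$. Then $$\min_{t\in[T]}\mathbb{E}\big[\|\nabla f(\theta^t)\|_2^2\big]\le\frac{2}{\eta CT}\big[f(\theta^0)-f(\theta^* )\big]+\frac{2\gamma\eta}{C}\sigma^2+\frac{1}{T}\sum_{t=1}^T\Big(\frac{1}{\gamma\eta C}+2\Big)\big(\mathcal{E}_{t,1}+\mathcal{E}_{t,2}\big),$$ where $\mathcal{E}_{t,1}=\mathbb{E}\big[\|\sum_{l\notin\mathcal{L}_t}\nabla_l f(\theta^t)\|^2\big]$ and $\mathcal{E}_{t,2}=\sum_{l\in\mathcal{L}_t}\chi_{\mathbf{w}_{t,l}\|\alpha}\kappa_l^2$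 with $\chi_{\mathbf{w}_{t,l}\|\alpha}=\sum_{i\in\mathcal{N}}\frac{(w_{i,l}^t-\alpha_i)^2}{\alpha_i}$.
   Context: There are $N$ clients $\mathcal{N}=\{1,\dots,N\}$; client $i$ has dataset $\mathcal{D}_i$ with $d_i>0$ samples, loss $F_i(\theta;\xi)$, local objective $f_i(\theta)=\frac1{d_i}\sum_{\xi\in\mathcal{D}_i}F_i(\theta;\xi)$; $\alpha_i=d_i/\sum_j d_j$ and the global objective is $f=\sum_i\alpha_i f_i$, which has a global minimizer $\theta^*$. The model $\theta\in\mathbb{R}^P$ is partitioned into $L$ layers indexed by $\mathcal{L}=\{1,\dots,L\}$; $\nabla_l F(\theta)$ denotes the gradient with respect to layer $l$'s parameters, viewed in $\mathbb{R}^P$ with zeros outside that block; $g_{i,l}(\theta;\xi)=\nabla_l F_i(\theta;\xi)$ is the stochastic layer gradient on mini-batch $\xi$. In each epoch $t$, a set $\mathcal{S}^t\subseteq\mathcal{N}$ of clients participates, each $i\in\mathcal{S}^t$ has a selected layer set $\mathcal{L}_i^t\subseteq\mathcal{L}$ (arbitrary, may vary with $i$ and $t$), and $\mathcal{L}_t=\bigcup_{i\in\mathcal{S}^t}\mathcal{L}_i^t$. Weights: $w_{i,l}^t=d_i/\sum_{j\in\mathcal{S}^t:\,l\in\mathcal{L}_j^t}d_j$ if $i\in\mathcal{S}^t$ and $l\in\mathcal{L}_i^t$, and $w_{i,l}^t=0$ otherwise (for every $i\in\mathcal{N}$). Update with $\tau=1$: each $i\in\mathcal{S}^t$ samples an independent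 mini-batch $\xi_i^t$, and $\theta^{t+1}=\theta^t-\eta\sum_{l\in\mathcal{L}_t}\sum_{i\in\mathcal{S}^t}w_{i,l}^t g_{i,l}(\theta^t;\xi_i^t)$. Expectations are over mini-batch sampling. *)

From HB Require Import structures.
From mathcomp Require Import all_boot all_order all_algebra.
From mathcomp Require Import boolp classical_sets reals topology normedtype derive.

Set Implicit Arguments.
Unset Strict Implicit.
Unset Printing Implicit Defensive.
Import Order.TTheory GRing.Theory Num.Theory.
Local Open Scope ring_scope.

Section FedDefs.
Variable R : realType.
Variables (P L N : nat).
Variable X : finType. (* type of mini-batches *)

Definition sqnorm (v : 'rV[R]_P) : R := \sum_(j < P) (v 0 j) ^+ 2.
Definition norm2 (v : 'rV[R]_P) : R := Num.sqrt (sqnorm v).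
Definition dotv (u v : 'rV[R]_P) : R := \sum_(j < P) u 0 j * v 0 j.

(* layer l block of a vector in R^P, zeros outside the block;
   [layer j] is the layer containing parameter coordinate j *)
Definition layer_mask (layer : 'I_P -> 'I_L) (l : 'I_L) (v : 'rV[R]_P) : 'rV[R]_P :=
  \row_j (if layer j == l then v 0 j else 0).

Definition alpha (d : 'I_N -> nat) (i : 'I_N) : R :=
  (d i)%:R / (\sum_(j < N) d j)%:R.

Definition fglob (d : 'I_N -> nat) (f : 'I_N -> 'rV[R]_P -> R) (th : 'rV[R]_P) : R :=
  \sum_(i < N) alpha d i * f i th.
Definition gradglob (d : 'I_N -> nat) (G : 'I_N -> 'rV[R]_P -> 'rV[R]_P)
  (th : 'rV[R]_P) : 'rV[R]_P :=
  \sum_(i < N) alpha d i *: G i th.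

Definition Lt (S : nat -> {set 'I_N}) (Ls : nat -> 'I_N -> {set 'I_L}) (t : nat)
  : {set 'I_L} := \bigcup_(i in S t) Ls t i.

Definition weight (d : 'I_N -> nat) (S : nat -> {set 'I_N})
  (Ls : nat -> 'I_N -> {set 'I_L}) (t : nat) (i : 'I_N) (l : 'I_L) : R :=
  if (i \in S t) && (l \in Ls t i)
  then (d i)%:R / (\sum_(j in S t | l \in Ls t j) d j)%:R
  else 0.

(* one epoch (tau = 1): xs i is the mini-batch sampled by client i,
   g i xi th is the full stochastic gradient nabla F_i(th; xi) *)
Definition step (layer : 'I_P -> 'I_L) (d : 'I_N -> nat) (S : nat -> {set 'I_N})
  (Ls : nat -> 'I_N -> {set 'I_L}) (g : 'I_N -> X -> 'rV[R]_P -> 'rV[R]_P)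
  (eta : R) (t : nat) (th : 'rV[R]_P) (xs : {ffun 'I_N -> X}) : 'rV[R]_P :=
  th - eta *: \sum_(l in Lt S Ls t) \sum_(i in S t)
                 weight d S Ls t i l *: layer_mask layer l (g i (xs i) th).

(* expectation over independent mini-batch sampling (client i samples
   with probability mass p i) of h(theta^{s+k}) started from theta^s = th *)
Fixpoint expect_from (layer : 'I_P -> 'I_L) (d : 'I_N -> nat) (S : nat -> {set 'I_N})
  (Ls : nat -> 'I_N -> {set 'I_L}) (g : 'I_N -> X -> 'rV[R]_P -> 'rV[R]_P)
  (p : 'I_N -> X -> R) (eta : R) (s k : nat) (h : 'rV[R]_P -> R) (th : 'rV[R]_P)
  : R :=
  match k with
  | 0 => h th
  | k'.+1 => \sum_(xs : {ffun 'I_N -> X}) (\prod_(i < N) p i (xs i)) *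
              expect_from layer d S Ls g p eta s.+1 k' h (step layer d S Ls g eta s th xs)
  end.

Definition expect_at layer d S Ls g p eta (th0 : 'rV[R]_P) (t : nat)
  (h : 'rV[R]_P -> R) : R :=
  expect_from layer d S Ls g p eta 0 t h th0.

Definition chi (d : 'I_N -> nat) (S : nat -> {set 'I_N})
  (Ls : nat -> 'I_N -> {set 'I_L}) (t : nat) (l : 'I_L) : R :=
  \sum_(i < N) (weight d S Ls t i l - alpha d i) ^+ 2 / alpha d i.

End FedDefs.

(* Each epoch is an SGD step along the aggregated layer-masked update v, whose
   mean u is the aggregated layer-masked true gradient (unbiasedness).  The
   descent lemma for the gamma-smooth global objective bounds E f(theta^{t+1})
   by f(theta^t) - eta <grad f, u> + gamma eta^2 (|u|^2 + sigma^2), since within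
   each selected layer v - u is a convex combination of deviations of squared
   norm at most sigma_l^2.  The vector u vanishes on the unselected layers, which
   produces E_{t,1}; on a selected layer l, u - grad f equals
   sum_i (w_{i,l} - alpha_i) (grad_l f_i - grad_l f) because w_{.,l} and alpha both
   have mass 1, so weighted Cauchy-Schwarz bounds its square by
   chi_{w_{t,l} || alpha} kappa_l^2, which produces E_{t,2}.  Completing the square
   coordinatewise bounds E |grad f(theta^t)|^2 by the expected decrease
   E f(theta^t) - E f(theta^{t+1}) plus error terms; this telescopes over t, the
   last value is at least the optimum f(theta^star), and the minimum over t is at
   most the mean. *)

From HB Require Import structures.
From mathcomp Require Import all_boot all_order all_algebra.
From mathcomp Require Import boolp classical_sets reals topology normedtype derive.
From mathcomp Require Import ring lra.
Import Order.TTheory GRing.Theory Num.Theory.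
Local Open Scope ring_scope.

Set Implicit Arguments.
Unset Strict Implicit.
Unset Printing Implicit Defensive.

Section Euclidean.
Variables (R : realType) (P : nat).
Implicit Types (a u v w : 'rV[R]_P) (c : R).

Lemma sqnorm_ge0 v : 0 <= sqnorm v.
Proof. by apply: sumr_ge0 => j _; apply: sqr_ge0. Qed.

Lemma sqnormZ c v : sqnorm (c *: v) = c ^+ 2 * sqnorm v.
Proof. by rewrite /sqnorm mulr_sumr; apply: eq_bigr => j _; rewrite mxE exprMn. Qed.

Lemma dotvC u v : dotv u v = dotv v u.
Proof. by apply: eq_bigr => j _; rewrite mulrC. Qed.

Lemma dotvBl u v w : dotv (u - v) w = dotv u w - dotv v w.
Proof. by rewrite /dotv -sumrB; apply: eq_bigr => j _; rewrite !mxE mulrBl. Qed.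

Lemma dotvZr c u v : dotv u (c *: v) = c * dotv u v.
Proof. by rewrite /dotv mulr_sumr; apply: eq_bigr => j _; rewrite mxE mulrCA. Qed.

Lemma dotv_sumZl (I : finType) (a : I -> R) (y : I -> 'rV[R]_P) w :
  dotv (\sum_i a i *: y i) w = \sum_i a i * dotv (y i) w.
Proof.
rewrite /dotv; under [RHS]eq_bigr => i _ do rewrite mulr_sumr.
rewrite [RHS]exchange_big /=; apply: eq_bigr => j _.
by rewrite summxE mulr_suml; apply: eq_bigr => i _; rewrite mxE mulrA.
Qed.

Lemma dotv_sumZr (I : finType) (a : I -> R) (y : I -> 'rV[R]_P) w :
  dotv w (\sum_i a i *: y i) = \sum_i a i * dotv w (y i).
Proof.
by rewrite dotvC dotv_sumZl; apply: eq_bigr => i _; rewrite dotvC.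
Qed.

Lemma dotv_le_sqnorm c u v : 0 < c -> dotv u v <= sqnorm u / (2 * c) + c / 2 * sqnorm v.
Proof.
move=> c0; rewrite /dotv /sqnorm mulr_suml mulr_sumr -big_split /=.
apply: ler_sum => j _; rewrite -subr_ge0.
have -> : u 0 j ^+ 2 / (2 * c) + c / 2 * v 0 j ^+ 2 - u 0 j * v 0 j
          = (u 0 j - c * v 0 j) ^+ 2 / (2 * c) by field; lra.
by apply: divr_ge0; [exact: sqr_ge0 | lra].
Qed.

Lemma sqnorm_le_split u v : sqnorm u <= 2 * sqnorm v + 2 * sqnorm (u - v).
Proof.
rewrite /sqnorm !mulr_sumr -big_split /=; apply: ler_sum => j _.
by rewrite !mxE; have := sqr_ge0 (u 0 j - 2 * v 0 j); nra.
Qed.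

Lemma sqnorm_le_of_norm2_le c u v :
  norm2 u <= c * norm2 v -> sqnorm u <= c ^+ 2 * sqnorm v.
Proof.
move=> le_uv; have n0 w : 0 <= norm2 w by exact: sqrtr_ge0.
have := ler_pM (n0 u) (n0 u) le_uv le_uv.
by rewrite mulrACA /norm2 -!expr2 !sqr_sqrtr ?sqnorm_ge0.
Qed.

Lemma quadratic_decrease_le (eta gamma : R) a u : 0 < eta -> 0 < gamma ->
  - eta * dotv a u + gamma * eta ^+ 2 * sqnorm u
  <= - (eta * (1 - 4 * eta * gamma) / 2) * sqnorm a
     + eta / 2 * (1 + 4 * gamma * eta) * sqnorm (u - a).
Proof.
move=> eta_gt0 gamma_gt0; rewrite /dotv /sqnorm !mulr_sumr -!big_split /=.
apply: ler_sum => j _; rewrite !mxE -subr_ge0.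
set x := a 0 j; set y := u 0 j.
have -> : - (eta * (1 - 4 * eta * gamma) / 2) * x ^+ 2
          + eta / 2 * (1 + 4 * gamma * eta) * (y - x) ^+ 2
          - (- eta * (x * y) + gamma * eta ^+ 2 * y ^+ 2)
        = eta / 2 * y ^+ 2 + gamma * eta ^+ 2 * (y - 2 * x) ^+ 2 by field.
by apply: addr_ge0; apply: mulr_ge0; rewrite ?sqr_ge0 ?mulr_ge0 ?sqr_ge0 //; lra.
Qed.

End Euclidean.

Section DescentLemma.
Variables (R : realType) (P : nat).
Variables (f : 'rV[R]_P -> R) (G : 'rV[R]_P -> 'rV[R]_P) (gamma : R).
Hypothesis f_grad : forall th v, is_derive th v (f : _ -> R^o) (dotv (G th) v).
Hypothesis gamma_gt0 : 0 < gamma.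
Hypothesis G_lipschitz :
  forall th th', sqnorm (G th - G th') <= gamma ^+ 2 * sqnorm (th - th').

Lemma is_derive_line (x h : 'rV[R]_P) (s : R) :
  is_derive (s : R^o) 1 (fun r : R^o => f (x + r *: h) : R^o) (dotv (G (x + s *: h)) h).
Proof.
have [df_ex df_eq] := f_grad (x + s *: h) h.
suff shiftE : (fun r : R => r^-1 *: ((fun r0 : R^o => f (x + r0 *: h) : R^o) (r *: (1 : R^o) + s)
                                       - f (x + s *: h)))
            = (fun r : R => r^-1 *: (f (r *: h + (x + s *: h)) - f (x + s *: h) : R^o)).
  by split; rewrite /derivable /derive /comp /shift /= shiftE.
apply/funext => r; suff -> : x + (r *: (1 : R^o) + s) *: h = r *: h + (x + s *: h) by [].
by rewrite [r *: (1 : R^o)]/GRing.scale /= mulr1 scalerDl addrCA addrA.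
Qed.

Lemma is_derive_quadratic (c k r : R) :
  is_derive (r : R^o) 1 (fun s : R^o => s * c + s * s * k : R^o) (c + (r + r) * k).
Proof.
have id_r : is_derive (r : R^o) (1 : R^o) (@id R^o) 1 := is_derive_id _ _.
have := is_deriveD (is_deriveZ c id_r) (is_deriveZ k (is_deriveM id_r id_r)).
set F := (X in is_derive _ _ X _) => F_deriv.
have -> : (fun s : R^o => s * c + s * s * k : R^o) = F.
  by apply/funext => s; change (s * c + s * s * k = c * s + k * (s * s)); ring.
apply: is_derive_eq F_deriv _.
by rewrite /GRing.scale /= !mulr1; ring.
Qed.

(* Apply the mean value theorem to [r |-> f (x + r h) - r <G x, h> - r^2 gamma/2 |h|^2]
   on [0, 1]: its derivative is nonpositive by the Lipschitz bound and Young. *)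
Lemma descent_lemma x h :
  f (x + h) <= f x + dotv (G x) h + gamma / 2 * sqnorm h.
Proof.
set c := dotv (G x) h; set k := gamma / 2 * sqnorm h.
pose phi := fun r : R^o => f (x + r *: h) - (r * c + r * r * k) : R^o.
pose dphi := fun r : R => dotv (G (x + r *: h)) h - (c + (r + r) * k).
have phi_deriv r : is_derive (r : R^o) 1 phi (dphi r).
  exact: is_deriveB (is_derive_line x h r) (is_derive_quadratic c k r).
have [r /[!in_itv] /= /andP[r_gt0 r_lt1] phiE] :=
  MVT ltr01 (fun r _ => phi_deriv r)
    (derivable_within_continuous (fun r _ => (phi_deriv r).(ex_derive))).
have dphi_le0 : dphi r <= 0.
  have gr0 : 0 < gamma * r by exact: mulr_gt0.
  have young := dotv_le_sqnorm (G (x + r *: h) - G x) h gr0.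
  have lip := G_lipschitz (x + r *: h) x.
  rewrite addrAC subrr add0r sqnormZ in lip.
  have lip' : sqnorm (G (x + r *: h) - G x) / (2 * (gamma * r)) <= gamma * r / 2 * sqnorm h.
    rewrite ler_pdivrMr ?pmulr_rgt0 //.
    suff -> : gamma * r / 2 * sqnorm h * (2 * (gamma * r)) = gamma ^+ 2 * (r ^+ 2 * sqnorm h).
      exact: lip.
    by field.
  by move: young; rewrite dotvBl /dphi /k /c; nra.
rewrite /phi /= scale0r addr0 scale1r !mul0r !mul1r !add0r subr0 in phiE.
rewrite -/c -/k; move: phiE dphi_le0; rewrite /dphi; nra.
Qed.

End DescentLemma.

Section FiniteSums.
Variables (R : realType) (I : finType).
Implicit Types (a c w z : I -> R) (S : {set I}).

Lemma sum_sqr_le_convex S w z :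
  (forall i, 0 <= w i) -> \sum_(i in S) w i = 1 ->
  (\sum_(i in S) w i * z i) ^+ 2 <= \sum_(i in S) w i * z i ^+ 2.
Proof.
move=> w_ge0 w_sum1; set m := \sum_(i in S) w i * z i.
have : 0 <= \sum_(i in S) w i * (z i - m) ^+ 2.
  by apply: sumr_ge0 => i _; apply: mulr_ge0 => //; exact: sqr_ge0.
have expand i : w i * (z i - m) ^+ 2 = w i * z i ^+ 2 - 2 * m * (w i * z i) + m ^+ 2 * w i.
  by ring.
rewrite (eq_bigr _ (fun i _ => expand i)) big_split /= sumrB -!mulr_sumr w_sum1 -/m.
lra.
Qed.

Lemma sum_sqr_le_weighted c a z :
  (forall i, 0 < a i) ->
  (\sum_i c i * z i) ^+ 2 <= (\sum_i c i ^+ 2 / a i) * (\sum_i a i * z i ^+ 2).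
Proof.
move=> a_gt0.
set A := \sum_i c i ^+ 2 / a i; set B := \sum_i a i * z i ^+ 2; set D := \sum_i c i * z i.
have B_ge0 : 0 <= B by apply: sumr_ge0 => i _; apply: mulr_ge0; [exact: ltW | exact: sqr_ge0].
have [B_gt0 | B_le0] := ltP 0 B.
  have : 0 <= \sum_i a i * (B * c i / a i - D * z i) ^+ 2.
    by apply: sumr_ge0 => i _; apply: mulr_ge0; [exact: ltW | exact: sqr_ge0].
  have expand i : a i * (B * c i / a i - D * z i) ^+ 2
      = B ^+ 2 * (c i ^+ 2 / a i) - 2 * B * D * (c i * z i) + D ^+ 2 * (a i * z i ^+ 2).
    by have ai_gt0 := a_gt0 i; field; lra.
  rewrite (eq_bigr _ (fun i _ => expand i)) big_split /= sumrB -!mulr_sumr -/A -/B -/D.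
  have -> : B ^+ 2 * A - 2 * B * D * D + D ^+ 2 * B = B * (A * B - D ^+ 2) by ring.
  by rewrite pmulr_rge0 // subr_ge0 mulrC.
have z0 i : z i = 0.
  have : a i * z i ^+ 2 <= 0.
    apply: le_trans B_le0; rewrite /B (bigD1 i) //= lerDl; apply: sumr_ge0 => k _.
    by apply: mulr_ge0; [exact: ltW | exact: sqr_ge0].
  by rewrite pmulr_rle0 // => z2_le0; apply/eqP; rewrite -sqrf_eq0 eq_le z2_le0 sqr_ge0.
rewrite /D big1 ?expr0n /= => [|i _]; last by rewrite z0 mulr0.
apply: mulr_ge0; last exact: B_ge0.
by apply: sumr_ge0 => i _; apply: divr_ge0; [exact: sqr_ge0 | exact: ltW].
Qed.

End FiniteSums.

Section LayerMasks.
Variables (R : realType) (P L N : nat) (lay : 'I_P -> 'I_L).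
Implicit Types (A : {set 'I_L}) (S : {set 'I_N}) (v : 'rV[R]_P).

Definition layers_mask A v : 'rV[R]_P := \row_j (if lay j \in A then v 0 j else 0).

(* [step] moves along [- eta *: aggregate (Lt S Ls t) (S t) (weight ..) g]. *)
Definition aggregate A S (w : 'I_N -> 'I_L -> R) (y : 'I_N -> 'rV[R]_P) : 'rV[R]_P :=
  \sum_(l in A) \sum_(i in S) w i l *: layer_mask lay l (y i).

Lemma sum_layer_eq A (F : 'I_L -> R) j :
  \sum_(l in A) (if lay j == l then F l else 0) = if lay j \in A then F (lay j) else 0.
Proof.
case: ifP => jA.
  rewrite (bigD1 (lay j)) //= eqxx big1 ?addr0 // => l /andP[_ neq].
  by rewrite eq_sym (negPf neq).
by rewrite big1 // => l lA; case: eqP => // E; rewrite E lA in jA.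
Qed.

Lemma sum_by_layer A (F : 'I_L -> 'I_P -> R) :
  \sum_(j < P) (if lay j \in A then F (lay j) j else 0)
  = \sum_(l in A) \sum_(j < P) (if lay j == l then F l j else 0).
Proof.
rewrite exchange_big /=; apply: eq_bigr => j _.
by rewrite -(sum_layer_eq A (fun l => F l j)).
Qed.

Lemma sum_layer_mask A v : \sum_(l in A) layer_mask lay l v = layers_mask A v.
Proof.
apply/rowP => j; rewrite summxE !mxE -(sum_layer_eq A (fun=> v 0 j)).
by apply: eq_bigr => l _; rewrite mxE.
Qed.

Lemma layer_maskB l u v : layer_mask lay l (u - v) = layer_mask lay l u - layer_mask lay l v.
Proof. by apply/rowP => j; rewrite !mxE; case: ifP; rewrite ?subr0. Qed.

Lemma sqnorm_layer_mask l v :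
  sqnorm (layer_mask lay l v) = \sum_(j < P) (if lay j == l then v 0 j ^+ 2 else 0).
Proof. by apply: eq_bigr => j _; rewrite mxE; case: eqP; rewrite ?expr0n. Qed.

Lemma sqnorm_layers_maskC A v :
  sqnorm v = sqnorm (layers_mask A v) + sqnorm (layers_mask (~: A) v).
Proof.
rewrite /sqnorm -big_split; apply: eq_bigr => j _.
by rewrite !mxE finset.in_setC; case: (lay j \in A); rewrite /= expr0n ?addr0 ?add0r.
Qed.

Lemma dotv_layers_mask A v u : layers_mask A u = u -> dotv v u = dotv (layers_mask A v) u.
Proof.
move=> <-; apply: eq_bigr => j _; rewrite !mxE.
by case: (lay j \in A); rewrite ?mulr0 ?mul0r.
Qed.

Variables (A : {set 'I_L}) (S : {set 'I_N}) (w : 'I_N -> 'I_L -> R).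

Lemma aggregateE y j :
  aggregate A S w y 0 j = if lay j \in A then \sum_(i in S) w i (lay j) * y i 0 j else 0.
Proof.
rewrite summxE -(sum_layer_eq A (fun l => \sum_(i in S) w i l * y i 0 j)).
apply: eq_bigr => l _; rewrite summxE.
case: (lay j =P l) => [<-|ne]; first by apply: eq_bigr => i _; rewrite !mxE eqxx.
by rewrite big1 // => i _; rewrite !mxE (introF eqP ne) mulr0.
Qed.

Lemma layers_mask_aggregate y : layers_mask A (aggregate A S w y) = aggregate A S w y.
Proof. by apply/rowP => j; rewrite !mxE aggregateE; case: (lay j \in A). Qed.

Lemma aggregateB y z :
  aggregate A S w y - aggregate A S w z = aggregate A S w (fun i => y i - z i).
Proof.
apply/rowP => j; rewrite !mxE !aggregateE.
case: ifP => _; last by rewrite subrr.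
by rewrite -sumrB; apply: eq_bigr => i _; rewrite !mxE mulrBr.
Qed.

Lemma sqnorm_aggregate_le y (k : 'I_L -> R) :
  (forall i l, 0 <= w i l) -> (forall l, l \in A -> \sum_(i in S) w i l = 1) ->
  (forall i l, i \in S -> sqnorm (layer_mask lay l (y i)) <= k l) ->
  sqnorm (aggregate A S w y) <= \sum_(l in A) k l.
Proof.
move=> w_ge0 w_sum1 y_le.
apply: (@le_trans _ _ (\sum_(j < P) (if lay j \in A then
    \sum_(i in S) w i (lay j) * y i 0 j ^+ 2 else 0))).
  apply: ler_sum => j _; rewrite aggregateE; case: ifP => jA; last by rewrite expr0n.
  exact: sum_sqr_le_convex (w_sum1 _ jA).
rewrite (sum_by_layer A (fun l j => \sum_(i in S) w i l * y i 0 j ^+ 2)).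
apply: ler_sum => l lA; rewrite -[k l]mul1r -(w_sum1 l lA) mulr_suml.
apply: (@le_trans _ _ (\sum_(i in S) w i l * sqnorm (layer_mask lay l (y i)))).
  under [X in _ <= X]eq_bigr => i _ do rewrite sqnorm_layer_mask mulr_sumr.
  rewrite [X in _ <= X]exchange_big /=; apply: ler_sum => j _.
  case: eqP => _ /=; first exact: lexx.
  by rewrite big1 // => i _; rewrite mulr0.
by apply: ler_sum => i iS; apply: ler_wpM2l => //; exact: y_le.
Qed.

Lemma sqnorm_aggregate_sub_le (a : 'I_N -> R) (k : 'I_L -> R) y :
  (forall i, 0 < a i) -> \sum_i a i <= 1 -> (forall l, 0 <= k l) ->
  (forall i l, i \notin S -> w i l = 0) ->
  (forall l, l \in A -> \sum_i w i l = \sum_i a i) ->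
  (forall i l,
     sqnorm (layer_mask lay l (\sum_i a i *: y i) - layer_mask lay l (y i)) <= k l) ->
  sqnorm (aggregate A S w y - layers_mask A (\sum_i a i *: y i))
  <= \sum_(l in A) (\sum_i (w i l - a i) ^+ 2 / a i) * k l.
Proof.
move=> a_gt0 a_sum_le1 k_ge0 w_supp w_mass y_le; set ybar := \sum_i a i *: y i.
set chi := fun l => \sum_i (w i l - a i) ^+ 2 / a i.
have ybarE j : ybar 0 j = \sum_i a i * y i 0 j.
  by rewrite summxE; apply: eq_bigr => i _; rewrite mxE.
apply: (@le_trans _ _ (\sum_(j < P) (if lay j \in A then
    chi (lay j) * \sum_i a i * (y i 0 j - ybar 0 j) ^+ 2 else 0))).
  apply: ler_sum => j _; rewrite !mxE aggregateE.
  case: ifP => jA; last by rewrite subrr expr0n.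
  (* [w _ l] and [a] have the same mass, so the mean [ybar] cancels out *)
  have -> : \sum_(i in S) w i (lay j) * y i 0 j - ybar 0 j
          = \sum_i (w i (lay j) - a i) * (y i 0 j - ybar 0 j).
    under [RHS]eq_bigr => i _ do rewrite mulrBl !mulrBr.
    rewrite !sumrB -!mulr_suml w_mass // -ybarE.
    suff -> : \sum_(i in S) w i (lay j) * y i 0 j = \sum_i w i (lay j) * y i 0 j by ring.
    by rewrite big_mkcond /=; apply: eq_bigr => i _; case: ifPn => // /w_supp ->; rewrite mul0r.
  exact: sum_sqr_le_weighted.
rewrite (sum_by_layer A (fun l j => chi l * \sum_i a i * (y i 0 j - ybar 0 j) ^+ 2)).
apply: ler_sum => l _.
rewrite (eq_bigr (fun j =>
    chi l * \sum_i a i * (if lay j == l then (y i 0 j - ybar 0 j) ^+ 2 else 0))); last first.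
  by move=> j _; case: eqP => _ //; rewrite big1 ?mulr0 // => i _; rewrite mulr0.
rewrite -mulr_sumr exchange_big /=; apply: ler_wpM2l.
  by apply: sumr_ge0 => i _; apply: divr_ge0; [exact: sqr_ge0 | exact: ltW].
rewrite -[k l]mul1r; apply: le_trans (ler_wpM2r (k_ge0 l) a_sum_le1); rewrite mulr_suml.
apply: ler_sum => i _; rewrite -mulr_sumr; apply: ler_wpM2l; first exact: ltW.
apply: le_trans (y_le i l); apply: ler_sum => j _; rewrite !mxE.
by case: eqP => _; rewrite ?subrr ?expr0n // -sqrrN opprB.
Qed.

End LayerMasks.

Section ProductPmf.
Variables (R : realType) (N : nat) (X : finType) (p : 'I_N -> X -> R).
Hypotheses (p_ge0 : forall i x, 0 <= p i x) (p_sum1 : forall i, \sum_x p i x = 1).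

Lemma prod_pmf_ge0 (xs : {ffun 'I_N -> X}) : 0 <= \prod_i p i (xs i).
Proof. by apply: prodr_ge0 => i _. Qed.

Lemma prod_pmf_gt0 (xs : {ffun 'I_N -> X}) i :
  \prod_i p i (xs i) != 0 -> 0 < p i (xs i).
Proof.
move=> pmf_neq0; rewrite lt_def p_ge0 andbT; apply: contraNneq pmf_neq0 => pi0.
by rewrite (bigD1 i) //= pi0 mul0r.
Qed.

Lemma sum_prod_pmf : \sum_(xs : {ffun 'I_N -> X}) \prod_i p i (xs i) = 1.
Proof. by rewrite -bigA_distr_bigA big1 // => i _; exact: p_sum1. Qed.

Lemma prod_pmf_marginal (i0 : 'I_N) (F : X -> R) :
  \sum_(xs : {ffun 'I_N -> X}) (\prod_i p i (xs i)) * F (xs i0) = \sum_x p i0 x * F x.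
Proof.
have -> : \sum_x p i0 x * F x
        = \prod_i \sum_x (if i == i0 then p i x * F x else p i x).
  rewrite (bigD1 i0) //= [X in _ * X]big1 ?mulr1; last by move=> i /negPf ->.
  by apply: eq_bigr => x _; rewrite eqxx.
rewrite bigA_distr_bigA; apply: eq_bigr => xs _.
rewrite (bigD1 i0) //= [in RHS](bigD1 i0) //= eqxx mulrAC; congr (_ * _).
by apply: eq_bigr => i /negPf ->.
Qed.

Lemma prod_pmf_marginal_row P (i0 : 'I_N) (F : X -> 'rV[R]_P) :
  \sum_(xs : {ffun 'I_N -> X}) (\prod_i p i (xs i)) *: F (xs i0) = \sum_x p i0 x *: F x.
Proof.
apply/rowP => j; rewrite !summxE.
under eq_bigr do rewrite mxE; under [RHS]eq_bigr do rewrite mxE.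
exact: prod_pmf_marginal (fun x => F x 0 j).
Qed.

End ProductPmf.

Definition step_mean (R : realType) (P L N : nat) (X : finType) (layer : 'I_P -> 'I_L)
    (d : 'I_N -> nat) (S : nat -> {set 'I_N}) (Ls : nat -> 'I_N -> {set 'I_L})
    (g : 'I_N -> X -> 'rV[R]_P -> 'rV[R]_P) (p : 'I_N -> X -> R) (eta : R) (t : nat)
    (h : 'rV[R]_P -> R) (th : 'rV[R]_P) : R :=
  \sum_(xs : {ffun 'I_N -> X}) (\prod_i p i (xs i)) * h (step layer d S Ls g eta t th xs).

Section Expectation.
Variables (R : realType) (P L N : nat) (X : finType).
Context {layer : 'I_P -> 'I_L} {d : 'I_N -> nat}.
Context {S : nat -> {set 'I_N}} {Ls : nat -> 'I_N -> {set 'I_L}}.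
Context {g : 'I_N -> X -> 'rV[R]_P -> 'rV[R]_P} {p : 'I_N -> X -> R} {eta : R}.
Hypotheses (p_ge0 : forall i x, 0 <= p i x) (p_sum1 : forall i, \sum_x p i x = 1).
Implicit Types (h : 'rV[R]_P -> R) (th : 'rV[R]_P).

Local Notation E := (expect_from layer d S Ls g p eta).

Lemma expect_from_le h1 h2 {s k th} :
  (forall th, h1 th <= h2 th) -> E s k h1 th <= E s k h2 th.
Proof.
move=> le_h; elim: k s th => [|k IHk] s th //=.
by apply: ler_sum => xs _; apply: ler_wpM2l; [exact: prod_pmf_ge0 | exact: IHk].
Qed.

Lemma expect_fromD h1 h2 s k th :
  E s k (fun th => h1 th + h2 th) th = E s k h1 th + E s k h2 th.
Proof.
elim: k s th => [|k IHk] s th //=.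
by rewrite -big_split; apply: eq_bigr => xs _; rewrite IHk mulrDr.
Qed.

Lemma expect_fromZ c h s k th : E s k (fun th => c * h th) th = c * E s k h th.
Proof.
elim: k s th => [|k IHk] s th //=.
by rewrite mulr_sumr; apply: eq_bigr => xs _; rewrite IHk mulrCA.
Qed.

Lemma expect_fromB h1 h2 s k th :
  E s k (fun th => h1 th - h2 th) th = E s k h1 th - E s k h2 th.
Proof.
rewrite -(mulN1r (E s k h2 th)) -expect_fromZ -expect_fromD.
by congr expect_from; apply/funext => th'; rewrite mulN1r.
Qed.

Lemma expect_from_cst c s k th : E s k (fun=> c) th = c.
Proof.
elim: k s th => [|k IHk] s th //=.
under eq_bigr do rewrite IHk.
by rewrite -mulr_suml sum_prod_pmf // mul1r.
Qed.

Lemma expect_fromS h s k th :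
  E s k.+1 h th = E s k (step_mean layer d S Ls g p eta (s + k) h) th.
Proof.
elim: k s th => [|k IHk] s th; first by rewrite /= addn0.
transitivity (\sum_(xs : {ffun 'I_N -> X}) (\prod_i p i (xs i)) *
                E s.+1 k.+1 h (step layer d S Ls g eta s th xs)); first by [].
by under eq_bigr do rewrite IHk addSnnS.
Qed.

End Expectation.

Section Weights.
Variables (R : realType) (L N : nat) (d : 'I_N -> nat).
Variables (S : nat -> {set 'I_N}) (Ls : nat -> 'I_N -> {set 'I_L}) (t : nat).
Hypothesis d_gt0 : forall i, (0 < d i)%N.

Lemma alpha_gt0 i : 0 < alpha R d i.
Proof. by rewrite divr_gt0 // ltr0n // (bigD1 i) //= ltn_addr. Qed.

Lemma alpha_sum (i0 : 'I_N) : \sum_i alpha R d i = 1.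
Proof.
rewrite -mulr_suml -natr_sum divff // pnatr_eq0 -lt0n.
by rewrite (bigD1 i0) //= ltn_addr.
Qed.

Lemma alpha_sum_le1 : \sum_i alpha R d i <= 1.
Proof.
case: (pickP 'I_N) => [i0 _ | no_client]; first by rewrite (alpha_sum i0).
by rewrite big1 // => i; have := no_client i.
Qed.

Lemma weight_ge0 i l : 0 <= weight R d S Ls t i l.
Proof. by rewrite /weight; case: ifP => // _; exact: divr_ge0. Qed.

Lemma weight_supp i l : i \notin S t -> weight R d S Ls t i l = 0.
Proof. by rewrite /weight => /negPf ->. Qed.

Lemma weight_sum l : l \in Lt S Ls t -> \sum_(i in S t) weight R d S Ls t i l = 1.
Proof.
move=> /bigcupP[i0 i0S li0].
rewrite (eq_bigr (fun i => if l \in Ls t i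
    then (d i)%:R / (\sum_(j in S t | l \in Ls t j) d j)%:R else 0)); last first.
  by move=> i iS; rewrite /weight iS.
rewrite -big_mkcondr /= -mulr_suml -natr_sum divff // pnatr_eq0 -lt0n.
by rewrite (bigD1 i0) ?i0S ?li0 //= ltn_addr.
Qed.

Lemma weight_mass l :
  l \in Lt S Ls t -> \sum_i weight R d S Ls t i l = \sum_i alpha R d i.
Proof.
move=> lA; have /bigcupP[i0 _ _] := lA.
rewrite (alpha_sum i0) -(weight_sum lA) [RHS]big_mkcond /=.
by apply: eq_bigr => i _; case: ifPn => // /weight_supp ->.
Qed.

End Weights.

Section Arithmetic.
Variable R : realType.

Lemma descent_rearrange (eta gamma sigma a b q e F0 F1 : R) :
  0 < eta -> 0 < gamma -> 0 < 1 - 4 * eta * gamma -> 0 <= b -> 0 <= q -> q <= e ->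
  F1 <= F0 - eta * (1 - 4 * eta * gamma) / 2 * a
        + eta / 2 * (1 + 4 * gamma * eta) * q + gamma * eta ^+ 2 * sigma ^+ 2 ->
  a + b <= 2 / (eta * (1 - 4 * eta * gamma)) * (F0 - F1)
           + 2 * gamma * eta / (1 - 4 * eta * gamma) * sigma ^+ 2
           + ((gamma * eta * (1 - 4 * eta * gamma))^-1 + 2) * (b + e).
Proof.
set C := 1 - 4 * eta * gamma => eta_gt0 gamma_gt0 C_gt0 b_ge0 q_ge0 q_le_e F1_le.
have ge_gt0 : 0 < gamma * eta by exact: mulr_gt0.
have geC_gt0 : 0 < gamma * eta * C by exact: mulr_gt0.
have a_le : a <= 2 / (eta * C) * (F0 - F1) + 2 * gamma * eta / C * sigma ^+ 2
                 + (1 + 4 * gamma * eta) / C * q.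
  have -> : 2 / (eta * C) * (F0 - F1) + 2 * gamma * eta / C * sigma ^+ 2
            + (1 + 4 * gamma * eta) / C * q
          = 2 / (eta * C) * (F0 - F1 + eta / 2 * (1 + 4 * gamma * eta) * q
                             + gamma * eta ^+ 2 * sigma ^+ 2).
    by field; rewrite !gt_eqF.
  rewrite -ler_pdivrMl ?divr_gt0 ?mulr_gt0 // invf_div; lra.
(* amounts to [gamma * eta * (1 + 4 * gamma * eta) <= 1], true as [gamma * eta < 1/4] *)
have coef_le : (1 + 4 * gamma * eta) / C <= (gamma * eta * C)^-1.
  rewrite invfM ler_pM2r ?invr_gt0 // -[(gamma * eta)^-1]mul1r ler_pdivlMr //.
  rewrite /C in C_gt0; nra.
have Kinv_ge0 : 0 <= (gamma * eta * C)^-1 by rewrite invr_ge0 ltW.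
have := ler_wpM2r q_ge0 coef_le; have := ler_wpM2l Kinv_ge0 q_le_e.
nra.
Qed.

Lemma bigmin_le_telescope (a F b : nat -> R) (c e Fmin : R) (T : nat) :
  (0 < T)%N -> 0 <= c -> (forall t, a t <= c * (F t - F t.+1) + e + b t) -> Fmin <= F T ->
  \big[Num.min/a 0%N]_(t < T) a t
    <= c / T%:R * (F 0%N - Fmin) + e + T%:R^-1 * \sum_(t < T) b t.
Proof.
move=> T_gt0 c_ge0 a_le Fmin_le; set m := \big[Num.min/a 0%N]_(t < T) a t.
have T_gt0' : 0 < T%:R :> R by rewrite ltr0n.
have m_le (s : 'I_T) : m <= a s by rewrite /m (bigD1 s) //= ge_min lexx.
have telescope : \sum_(t < T) (F t - F t.+1) = F 0%N - F T.
  rewrite -opprB -(telescope_sumr _ (leq0n T)) big_mkord -sumrN.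
  by apply: eq_bigr => t _; rewrite opprB.
have sum_a_le : \sum_(t < T) a t <= c * (F 0%N - Fmin) + T%:R * e + \sum_(t < T) b t.
  apply: (@le_trans _ _ (\sum_(t < T) (c * (F t - F t.+1) + e + b t))).
    by apply: ler_sum => t _; exact: a_le.
  rewrite !big_split /= -mulr_sumr telescope sumr_const card_ord mulr_natl !lerD2r.
  by apply: ler_wpM2l => //; rewrite lerD2l lerN2.
rewrite -(ler_pM2l T_gt0').
have -> : T%:R * (c / T%:R * (F 0%N - Fmin) + e + T%:R^-1 * \sum_(t < T) b t)
        = c * (F 0%N - Fmin) + T%:R * e + \sum_(t < T) b t by field; rewrite gt_eqF.
apply: le_trans sum_a_le.
rewrite (_ : T%:R * m = \sum_(t < T) m); last by rewrite sumr_const card_ord mulr_natl.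
by apply: ler_sum => s _; exact: m_le.
Qed.

End Arithmetic.

Lemma fglob_descent (R : realType) (P N : nat) (d : 'I_N -> nat)
    (f : 'I_N -> 'rV[R]_P -> R) (G : 'I_N -> 'rV[R]_P -> 'rV[R]_P) (gamma : R) :
  (forall i, (0 < d i)%N) ->
  (forall i th v, is_derive th v (f i : 'rV[R]_P -> R^o) (dotv (G i th) v)) ->
  0 < gamma ->
  (forall i th th', norm2 (G i th - G i th') <= gamma * norm2 (th - th')) ->
  forall x h,
  fglob d f (x + h) <= fglob d f x + dotv (gradglob d G x) h + gamma / 2 * sqnorm h.
Proof.
move=> d_gt0 f_grad gamma_gt0 G_lip x h.
have local_descent i := descent_lemma (f_grad i) gamma_gt0
  (fun th th' => sqnorm_le_of_norm2_le (G_lip i th th')) x h.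
rewrite /fglob /gradglob dotv_sumZl.
apply: (@le_trans _ _ (\sum_i alpha R d i * (f i x + dotv (G i x) h + gamma / 2 * sqnorm h))).
  apply: ler_sum => i _; apply: ler_wpM2l; last exact: local_descent.
  exact/ltW/alpha_gt0.
under eq_bigr => i _ do rewrite !mulrDr.
rewrite !big_split /= lerD2l -mulr_suml -[X in _ <= X]mul1r.
apply: ler_wpM2r; last exact: alpha_sum_le1.
by apply: mulr_ge0; [lra | exact: sqnorm_ge0].
Qed.

Section OneEpoch.
Variables (R : realType) (P L N : nat) (X : finType).
Variables (layer : 'I_P -> 'I_L) (d : 'I_N -> nat).
Variables (f : 'I_N -> 'rV[R]_P -> R) (G : 'I_N -> 'rV[R]_P -> 'rV[R]_P).
Variables (g : 'I_N -> X -> 'rV[R]_P -> 'rV[R]_P) (p : 'I_N -> X -> R).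
Variables (S : nat -> {set 'I_N}) (Ls : nat -> 'I_N -> {set 'I_L}).
Variables (eta gamma sigma : R) (sigmal kappa : 'I_L -> R) (t : nat).
Hypotheses (d_gt0 : forall i, (0 < d i)%N)
  (p_ge0 : forall i x, 0 <= p i x) (p_sum1 : forall i, \sum_x p i x = 1).
Hypotheses (eta_gt0 : 0 < eta) (gamma_gt0 : 0 < gamma)
  (C_gt0 : 0 < 1 - 4 * eta * gamma).
Hypothesis descent : forall x h,
  fglob d f (x + h) <= fglob d f x + dotv (gradglob d G x) h + gamma / 2 * sqnorm h.
Hypothesis unbiased : forall i l th,
  \sum_x p i x *: layer_mask layer l (g i x th) = layer_mask layer l (G i th).
Hypothesis variance_le : forall i l th x, 0 < p i x ->
  sqnorm (layer_mask layer l (g i x th) - layer_mask layer l (G i th)) <= sigmal l ^+ 2.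
Hypothesis sigma_le : \sum_(l in Lt S Ls t) sigmal l ^+ 2 <= sigma ^+ 2.
Hypothesis diversity_le : forall i l th,
  sqnorm (layer_mask layer l (gradglob d G th) - layer_mask layer l (G i th)) <= kappa l ^+ 2.

Local Notation A := (Lt S Ls t).
Local Notation w := (weight R d S Ls t).
Local Notation batches := {ffun 'I_N -> X}.
Local Notation pmf xs := (\prod_i p i (xs i)).
Local Notation dir th xs := (aggregate layer A (S t) w (fun i => g i (xs i) th)).
Local Notation mean_dir th := (aggregate layer A (S t) w (fun i => G i th)).

Lemma sum_pmf_dir th : \sum_(xs : batches) pmf xs *: dir th xs = mean_dir th.
Proof.
under eq_bigr => xs _ do rewrite scaler_sumr.
rewrite exchange_big; apply: eq_bigr => l _.
under eq_bigr => xs _ do rewrite scaler_sumr.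
rewrite exchange_big; apply: eq_bigr => i _.
under eq_bigr => xs _ do rewrite scalerA mulrC -scalerA.
rewrite -scaler_sumr -unbiased.
by rewrite (prod_pmf_marginal_row p_sum1 i (fun x => layer_mask layer l (g i x th))).
Qed.

Lemma dir_dev_le th (xs : batches) :
  pmf xs != 0 -> sqnorm (dir th xs - mean_dir th) <= sigma ^+ 2.
Proof.
move=> pmf_neq0; rewrite aggregateB; apply: le_trans sigma_le.
apply: sqnorm_aggregate_le => [i l | l | i l _].
- exact: weight_ge0.
- exact: weight_sum.
- by rewrite layer_maskB; apply: variance_le (prod_pmf_gt0 p_ge0 i pmf_neq0).
Qed.

Lemma step_mean_fglob_le th :
  step_mean layer d S Ls g p eta t (fglob d f) th
  <= fglob d f th - eta * dotv (gradglob d G th) (mean_dir th)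
     + gamma * eta ^+ 2 * (sqnorm (mean_dir th) + sigma ^+ 2).
Proof.
set F := fglob d f th; set Gf := gradglob d G th; set u := mean_dir th.
set c := gamma / 2 * eta ^+ 2.
have c_ge0 : 0 <= c by apply: mulr_ge0; [apply: divr_ge0; exact: ltW | exact: sqr_ge0].
have sum_pmf1 := sum_prod_pmf p_sum1.
have mean_dot : \sum_(xs : batches) pmf xs * dotv Gf (dir th xs) = dotv Gf u.
  by rewrite -dotv_sumZr sum_pmf_dir.
have mean_sqnorm :
    \sum_(xs : batches) pmf xs * sqnorm (dir th xs) <= 2 * sqnorm u + 2 * sigma ^+ 2.
  apply: (@le_trans _ _ (\sum_(xs : batches) pmf xs * (2 * sqnorm u + 2 * sigma ^+ 2))).
    apply: ler_sum => xs _.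
    have [->|pmf_neq0] := eqVneq (pmf xs) 0; first by rewrite !mul0r.
    apply: ler_wpM2l; first exact: prod_pmf_ge0.
    apply: le_trans (sqnorm_le_split _ u) _; rewrite lerD2l ler_wpM2l //.
    exact: dir_dev_le.
  by rewrite -mulr_suml sum_pmf1 mul1r.
apply: (@le_trans _ _ (\sum_(xs : batches)
    pmf xs * (F - eta * dotv Gf (dir th xs) + c * sqnorm (dir th xs)))).
  apply: ler_sum => xs _; apply: ler_wpM2l; first exact: prod_pmf_ge0.
  apply: le_trans (descent _ _) _.
  by rewrite -scaleNr dotvZr sqnormZ sqrrN -/F -/Gf /c; lra.
have -> : \sum_(xs : batches)
            pmf xs * (F - eta * dotv Gf (dir th xs) + c * sqnorm (dir th xs))
        = F * \sum_(xs : batches) pmf xs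
          - eta * \sum_(xs : batches) pmf xs * dotv Gf (dir th xs)
          + c * \sum_(xs : batches) pmf xs * sqnorm (dir th xs).
  by rewrite !mulr_sumr -sumrB -big_split /=; apply: eq_bigr => xs _; ring.
have -> : gamma * eta ^+ 2 * (sqnorm u + sigma ^+ 2) = c * (2 * sqnorm u + 2 * sigma ^+ 2).
  by rewrite /c; field.
by rewrite sum_pmf1 mulr1 mean_dot lerD2l ler_wpM2l.
Qed.

Lemma mean_dir_dev_le th :
  sqnorm (mean_dir th - layers_mask layer A (gradglob d G th))
  <= \sum_(l in A) chi R d S Ls t l * kappa l ^+ 2.
Proof.
apply: sqnorm_aggregate_sub_le => [i | | l | i l | l | i l].
- exact: alpha_gt0.
- exact: alpha_sum_le1.
- exact: sqr_ge0.
- exact: weight_supp.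
- exact: weight_mass.
- exact: diversity_le.
Qed.

Lemma sqnorm_gradglob_le th :
  sqnorm (gradglob d G th)
  <= 2 / (eta * (1 - 4 * eta * gamma))
       * (fglob d f th - step_mean layer d S Ls g p eta t (fglob d f) th)
     + 2 * gamma * eta / (1 - 4 * eta * gamma) * sigma ^+ 2
     + ((gamma * eta * (1 - 4 * eta * gamma))^-1 + 2) *
       (sqnorm (\sum_(l in ~: A) layer_mask layer l (gradglob d G th))
        + \sum_(l in A) chi R d S Ls t l * kappa l ^+ 2).
Proof.
set Gf := gradglob d G th; set u := mean_dir th.
have u_supp : layers_mask layer A u = u := layers_mask_aggregate _ _ _ _ _.
rewrite sum_layer_mask (sqnorm_layers_maskC layer A Gf).
apply: (descent_rearrange eta_gt0 gamma_gt0 C_gt0 (sqnorm_ge0 _) (sqnorm_ge0 _)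
                          (mean_dir_dev_le th)).
apply: le_trans (step_mean_fglob_le th) _.
have := quadratic_decrease_le (layers_mask layer A Gf) u eta_gt0 gamma_gt0.
rewrite -(dotv_layers_mask _ u_supp); lra.
Qed.

Local Notation E th0 t h := (expect_at layer d S Ls g p eta th0 t h).

Lemma expect_sqnorm_gradglob_le th0 :
  E th0 t (fun th => sqnorm (gradglob d G th))
  <= 2 / (eta * (1 - 4 * eta * gamma)) * (E th0 t (fglob d f) - E th0 t.+1 (fglob d f))
     + 2 * gamma * eta / (1 - 4 * eta * gamma) * sigma ^+ 2
     + ((gamma * eta * (1 - 4 * eta * gamma))^-1 + 2) *
       (E th0 t (fun th =>
          sqnorm (\sum_(l in ~: A) layer_mask layer l (gradglob d G th)))
        + \sum_(l in A) chi R d S Ls t l * kappa l ^+ 2).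
Proof.
apply: le_trans (expect_from_le p_ge0 sqnorm_gradglob_le) _.
rewrite !(expect_fromB, expect_fromD, expect_fromZ, expect_from_cst p_sum1).
by rewrite /expect_at [in X in _ <= X]expect_fromS.
Qed.

End OneEpoch.

Theorem theorem1 (R : realType) (P L N : nat) (X : finType)
  (layer : 'I_P -> 'I_L) (d : 'I_N -> nat)
  (f : 'I_N -> 'rV[R]_P -> R) (G : 'I_N -> 'rV[R]_P -> 'rV[R]_P)
  (g : 'I_N -> X -> 'rV[R]_P -> 'rV[R]_P) (p : 'I_N -> X -> R)
  (S : nat -> {set 'I_N}) (Ls : nat -> 'I_N -> {set 'I_L})
  (theta0 thetastar : 'rV[R]_P) (eta gamma sigma : R)
  (sigmal kappa : 'I_L -> R) (T : nat) :
  (* datasets are nonempty *)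
  (forall i, (0 < d i)%N) ->
  (* G i is the gradient of f i *)
  (forall i th v, is_derive th v (f i : 'rV[R]_P -> R^o) (dotv (G i th) v)) ->
  (* thetastar is a global minimizer of f *)
  (forall th, fglob d f thetastar <= fglob d f th) ->
  (* p i is a probability mass function of the mini-batch of client i *)
  (forall i xi, 0 <= p i xi) -> (forall i, \sum_(xi : X) p i xi = 1) ->
  0 < eta ->
  (* (i) gamma-smoothness *)
  0 < gamma ->
  (forall i th th', norm2 (G i th - G i th') <= gamma * norm2 (th - th')) ->
  (* (ii) unbiasedness and bounded variance *)
  (forall i l th, \sum_(xi : X) p i xi *: layer_mask layer l (g i xi th)
                  = layer_mask layer l (G i th)) ->
  (forall l, 0 < sigmal l) ->
  (forall i l th xi, 0 < p i xi ->
     sqnorm (layer_mask layer l (g i xi th) - layer_mask layer l (G i th))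
       <= sigmal l ^+ 2) ->
  (forall t, \sum_(l in Lt S Ls t) sigmal l ^+ 2 <= sigma ^+ 2) ->
  (* (iii) gradient diversity *)
  (forall l, 0 < kappa l) ->
  (forall i l th,
     sqnorm (layer_mask layer l (gradglob d G th) - layer_mask layer l (G i th))
       <= kappa l ^+ 2) ->
  0 < 1 - 4 * eta * gamma ->
  (0 < T)%N ->
  let C := 1 - 4 * eta * gamma in
  let Egrad t := expect_at layer d S Ls g p eta theta0 t
                   (fun th => sqnorm (gradglob d G th)) in
  let E1 t := expect_at layer d S Ls g p eta theta0 t
                (fun th => sqnorm (\sum_(l in ~: Lt S Ls t)
                                     layer_mask layer l (gradglob d G th))) in
  let E2 t := \sum_(l in Lt S Ls t) chi R d S Ls t l * kappa l ^+ 2 in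
  \big[Num.min/Egrad 0%N]_(t < T) Egrad t
    <= 2 / (eta * C * T%:R) * (fglob d f theta0 - fglob d f thetastar)
       + 2 * gamma * eta / C * sigma ^+ 2
       + T%:R^-1 * \sum_(t < T) ((gamma * eta * C)^-1 + 2) * (E1 t + E2 t).
Proof.
move=> d_gt0 f_grad f_min p_ge0 p_sum1 eta_gt0 gamma_gt0 G_lip unbiased _ variance_le
  sigma_le _ diversity_le C_gt0 T_gt0.
have descent := fglob_descent d_gt0 f_grad gamma_gt0 G_lip.
have epoch_le t := expect_sqnorm_gradglob_le d_gt0 p_ge0 p_sum1 eta_gt0 gamma_gt0 C_gt0
  descent unbiased variance_le (sigma_le t) diversity_le theta0.
have f_min_le : fglob d f thetastar <= expect_at layer d S Ls g p eta theta0 T (fglob d f).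
  by apply: le_trans _ (expect_from_le p_ge0 f_min); rewrite expect_from_cst.
apply: le_trans (bigmin_le_telescope T_gt0 _ epoch_le f_min_le) _.
  by apply: divr_ge0 => //; apply/ltW/mulr_gt0.
(* [expect_at _ _ _ _ _ _ _ theta0 0 h] computes to [h theta0] *)
rewrite (_ : 2 / (eta * (1 - 4 * eta * gamma)) / T%:R
             = 2 / (eta * (1 - 4 * eta * gamma) * T%:R)); first exact: lexx.
by rewrite [in RHS]invfM mulrA.
Qed.
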